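(* Let $(A,\diamond,\circ,\lambda)$ be a left semi-truss such that $(A,\diamond)$ is an inverse semigroup, let $\sigma(a,b)=a\circ(b\diamond b^\diamond)$, and assume that $\lambda(a,b)=\sigma(a,b)^\diamond\diamond(a\circ b)$ for all $a,b\in A$. Then for all $a,b,c\in A$ and every idempotent $e\in E(A,\diamond)$: (1) $\sigma(a,e\diamond b)=\sigma(a,e)\diamond\sigma(a,b)^\diamond\diamond\sigma(a,b)$; (2) $\sigma(a,e\diamond b)=\sigma(a,b)\diamond\sigma(a,e)^\diamond\diamond\sigma(a,e)$; (3) $\sigma(a,b)\diamond\sigma(a,c)^\diamond$ and $\sigma(a,c)\diamond\sigma(a,b)^\diamond$ are idempotents of $(A,\diamond)$ and are equal to each other; (4) $\sigma(a,b)\sim_l\sigma(a,c)$; (5) $\sigma(a,b^\diamond)\diamond(a\circ b)^\diamond=(a\circ b^\diamond)\diamond\sigma(a,b)^\diamond$; (6) $(a\circ b)^\diamond\diamond\sigma(a,b)=\sigma(a,b^\diamond)^\diamond\diamond(a\circ b^\diamond)$; (7) $\lambda(a,b^\diamond)=\lambda(a,b)^\diamond$; (8) $\lambda(a,e\diamond b)=\lambda(a,e)\diamond\lambda(a,b)$.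
   Context: An inverse semigroup is a semigroup $(A,\diamond)$ in which every $a$ has a unique $a^\diamond$ with $a\diamond a^\diamond\diamond a=a$ and $a^\diamond\diamond a\diamond a^\diamond=a^\diamond$. $E(A,\diamond)$ denotes the set of idempotents of $(A,\diamond)$. Two elements $x,y$ of an inverse semigroup satisfy the left compatibility relation $x\sim_l y$ if $x\diamond y^\diamond$ is an idempotent. A left semi-truss $(A,\diamond,\circ,\lambda)$ is a set $A$ with two associative binary operations $\diamond,\circ$ and a function $\lambda:A\times A\to A$ such that $a\circ(b\diamond c)=(a\circ b)\diamond\lambda(a,c)$ for all $a,b,c\in A$. *)

Set Implicit Arguments.

Definition associative {A : Type} (op : A -> A -> A) : Prop :=
  forall x y z, op x (op y z) = op (op x y) z.

Definition is_inv {A : Type} (op : A -> A -> A) (a b : A) : Prop :=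
  op (op a b) a = a /\ op (op b a) b = b.

Definition inverse_semigroup {A : Type} (op : A -> A -> A) (inv : A -> A) : Prop :=
  associative op /\
  (forall a, is_inv op a (inv a)) /\
  (forall a b, is_inv op a b -> b = inv a).

Definition idempotent {A : Type} (op : A -> A -> A) (e : A) : Prop :=
  op e e = e.

Definition left_compatible {A : Type} (op : A -> A -> A) (inv : A -> A) (x y : A) : Prop :=
  idempotent op (op x (inv y)).

Definition left_semi_truss {A : Type} (op circ : A -> A -> A) (lam : A -> A -> A) : Prop :=
  associative op /\ associative circ /\
  forall a b c, circ a (op b c) = op (circ a b) (lam a c).

Definition sigma {A : Type} (op circ : A -> A -> A) (inv : A -> A) (a b : A) : A :=
  circ a (op b (inv b)).

(* Two facts carry the proof.  In an inverse semigroup idempotents commute and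
   (x ⋄ y)^⋄ = y^⋄ ⋄ x^⋄.  In the semi-truss, the hypothesis on λ turns the
   distributive law into a ∘ (x ⋄ y) = (a ∘ x) ⋄ σ(a,y)^⋄ ⋄ (a ∘ y), and since
   σ(a,g) = a ∘ g for an idempotent g, a ∘ (x ⋄ g) = (a ∘ x) ⋄ (a ∘ g)^⋄ ⋄ (a ∘ g).
   Expanding a ∘ (e ⋄ f) and a ∘ (f ⋄ e) for the commuting idempotents
   e = b ⋄ b^⋄, f = c ⋄ c^⋄ gives (3) and (4); expanding a ∘ (b ⋄ b^⋄) and
   a ∘ (b^⋄ ⋄ b) relates σ(a,b), σ(a,b^⋄), a ∘ b and a ∘ b^⋄, which yields (5)–(7);
   (8) is (1) combined with commuting the idempotents σ(a,b)^⋄ ⋄ σ(a,b) and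
   (a ∘ e)^⋄ ⋄ (a ∘ e). *)

From Stdlib Require Import Setoid.

Set Implicit Arguments.

Section InverseSemigroup.

Variables (A : Type) (op : A -> A -> A) (inv : A -> A).
Hypothesis Hinv : inverse_semigroup op inv.

Lemma opA : associative op.
Proof. exact (proj1 Hinv). Qed.

Lemma is_inv_inv (x : A) : is_inv op x (inv x).
Proof. exact (proj1 (proj2 Hinv) x). Qed.

Lemma inv_unique (x y : A) : is_inv op x y -> y = inv x.
Proof. exact (proj2 (proj2 Hinv) x y). Qed.

Ltac assoc_r := repeat rewrite <- opA.

Lemma mul_inv_mul (x : A) : op x (op (inv x) x) = x.
Proof. rewrite opA; exact (proj1 (is_inv_inv x)). Qed.

Lemma mul_inv_mulz (x z : A) : op x (op (inv x) (op x z)) = op x z.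
Proof. rewrite (opA (inv x)), opA, mul_inv_mul; reflexivity. Qed.

Lemma invK (x : A) : inv (inv x) = x.
Proof.
  symmetry; apply inv_unique.
  destruct (is_inv_inv x) as [H1 H2]; split; assumption.
Qed.

Lemma inv_mul_inv (x : A) : op (inv x) (op x (inv x)) = inv x.
Proof. rewrite <- (invK x) at 2; apply mul_inv_mul. Qed.

Lemma inv_mul_invz (x z : A) : op (inv x) (op x (op (inv x) z)) = op (inv x) z.
Proof. rewrite <- (invK x) at 2; apply mul_inv_mulz. Qed.

Lemma idem_mulz (e z : A) : idempotent op e -> op e (op e z) = op e z.
Proof. intro He; rewrite opA, He; reflexivity. Qed.

Lemma inv_idem (e : A) : idempotent op e -> inv e = e.
Proof.
  intro He; symmetry; apply inv_unique.
  unfold is_inv; rewrite !He; split; reflexivity.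
Qed.

Lemma idem_mulV (x : A) : idempotent op (op x (inv x)).
Proof. unfold idempotent; rewrite opA, <- (opA x (inv x) x), mul_inv_mul; reflexivity. Qed.

Lemma idem_Vmul (x : A) : idempotent op (op (inv x) x).
Proof. rewrite <- (invK x) at 2; apply idem_mulV. Qed.

(* The inverse x of e ⋄ f is f ⋄ x ⋄ e, by uniqueness; this shape forces x ⋄ x = x. *)
Lemma idem_mul (e f : A) :
  idempotent op e -> idempotent op f -> idempotent op (op e f).
Proof.
  intros He Hf.
  assert (Hx : op f (op (inv (op e f)) e) = inv (op e f)).
  { apply inv_unique; split; assoc_r; rewrite (idem_mulz _ Hf), (idem_mulz _ He).
    - rewrite opA, mul_inv_mul; reflexivity.
    - rewrite (opA e f), inv_mul_invz; reflexivity. }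
  assert (Hx_idem : idempotent op (inv (op e f))).
  { unfold idempotent; rewrite <- Hx; assoc_r.
    rewrite (opA e f), inv_mul_invz; reflexivity. }
  rewrite <- (invK (op e f)), (inv_idem Hx_idem); exact Hx_idem.
Qed.

Lemma idem_comm (e f : A) :
  idempotent op e -> idempotent op f -> op e f = op f e.
Proof.
  intros He Hf.
  rewrite <- (inv_idem (idem_mul He Hf)); symmetry; apply inv_unique.
  split; assoc_r; rewrite ?(idem_mulz _ He), ?(idem_mulz _ Hf), opA.
  - exact (idem_mul He Hf).
  - exact (idem_mul Hf He).
Qed.

Lemma comm_idem_pairs (x y u v z : A) :
  idempotent op (op x y) -> idempotent op (op u v) ->
  op x (op y (op u (op v z))) = op u (op v (op x (op y z))).
Proof.
  intros Hxy Huv.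
  rewrite (opA u v z), (opA x y), opA, (idem_comm Hxy Huv); assoc_r; reflexivity.
Qed.

Lemma inv_op (x y : A) : inv (op x y) = op (inv y) (inv x).
Proof.
  symmetry; apply inv_unique; split; assoc_r.
  - rewrite (comm_idem_pairs y (idem_mulV y) (idem_Vmul x)).
    rewrite mul_inv_mulz, mul_inv_mul; reflexivity.
  - rewrite (comm_idem_pairs (inv x) (idem_Vmul x) (idem_mulV y)).
    rewrite inv_mul_invz, inv_mul_inv; reflexivity.
Qed.

Lemma inv_mul_mulV (x z : A) : op (inv (op x z)) (op x (inv x)) = inv (op x z).
Proof.
  rewrite <- (inv_idem (idem_mulV x)) at 1.
  rewrite <- inv_op, <- opA, mul_inv_mulz; reflexivity.
Qed.

Lemma Vmul_inv_mul (x z : A) : op (op (inv x) x) (inv (op z x)) = inv (op z x).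
Proof.
  rewrite <- (inv_idem (idem_Vmul x)) at 1.
  rewrite <- inv_op; assoc_r; rewrite mul_inv_mul; reflexivity.
Qed.

Lemma idem_mul_mulV (e b : A) :
  idempotent op e -> op (op e b) (inv (op e b)) = op e (op b (inv b)).
Proof.
  intro He.
  rewrite inv_op, (inv_idem He); assoc_r.
  rewrite (opA b (inv b) e), (idem_comm (idem_mulV b) He), (idem_mulz _ He).
  reflexivity.
Qed.

Lemma mul_inv_idem_of_comm (u v : A) :
  op u (op (inv v) v) = op v (op (inv u) u) -> idempotent op (op u (inv v)).
Proof.
  intro Huv.
  assert (Hp : op u (inv v) = op (op v (inv u)) (op u (inv v))).
  { transitivity (op (op u (op (inv v) v)) (inv v)).
    - assoc_r; rewrite inv_mul_inv; reflexivity.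
    - rewrite Huv; assoc_r; reflexivity. }
  assert (Hq : op v (inv u) = inv (op u (inv v))) by (rewrite inv_op, invK; reflexivity).
  rewrite Hp, Hq; apply idem_Vmul.
Qed.

Lemma mul_inv_comm_of_comm (u v : A) :
  op u (op (inv v) v) = op v (op (inv u) u) -> op u (inv v) = op v (inv u).
Proof.
  intro Huv.
  rewrite <- (inv_idem (mul_inv_idem_of_comm Huv)), inv_op, invK; reflexivity.
Qed.

Section SemiTruss.

Variables (circ lam : A -> A -> A).
Hypothesis Htruss : left_semi_truss op circ lam.
Hypothesis Hlam : forall a b, lam a b = op (inv (sigma op circ inv a b)) (circ a b).

Notation s := (sigma op circ inv).

Lemma circ_op (a x y : A) : circ a (op x y) = op (circ a x) (op (inv (s a y)) (circ a y)).
Proof. rewrite (proj2 (proj2 Htruss)), Hlam; reflexivity. Qed.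

Lemma sigma_idem (a e : A) : idempotent op e -> s a e = circ a e.
Proof. intro He; unfold sigma; rewrite (inv_idem He), He; reflexivity. Qed.

Lemma circ_op_idem (a x g : A) :
  idempotent op g -> circ a (op x g) = op (circ a x) (op (inv (circ a g)) (circ a g)).
Proof. intro Hg; rewrite circ_op, (sigma_idem a Hg); reflexivity. Qed.

Lemma circ_idem_comm (a e f : A) :
  idempotent op e -> idempotent op f ->
  op (circ a e) (op (inv (circ a f)) (circ a f))
  = op (circ a f) (op (inv (circ a e)) (circ a e)).
Proof.
  intros He Hf.
  rewrite <- (circ_op_idem a e Hf), <- (circ_op_idem a f He), (idem_comm He Hf).
  reflexivity.
Qed.

Lemma sigma_idem_mul (a b e : A) :
  idempotent op e -> s a (op e b) = op (op (s a e) (inv (s a b))) (s a b).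
Proof.
  intro He.
  rewrite (sigma_idem a He); unfold sigma at 1.
  rewrite (idem_mul_mulV b He), (circ_op_idem a e (idem_mulV b)), opA.
  reflexivity.
Qed.

Lemma sigma_idem_mulC (a b e : A) :
  idempotent op e -> s a (op e b) = op (op (s a b) (inv (s a e))) (s a e).
Proof.
  intro He.
  rewrite (sigma_idem a He); unfold sigma at 1.
  rewrite (idem_mul_mulV b He), (idem_comm He (idem_mulV b)), (circ_op_idem _ _ He), opA.
  reflexivity.
Qed.

Lemma sigma_mul_inv_idem (a b c : A) : idempotent op (op (s a b) (inv (s a c))).
Proof. apply mul_inv_idem_of_comm, circ_idem_comm; apply idem_mulV. Qed.

Lemma sigma_mul_inv_comm (a b c : A) : op (s a b) (inv (s a c)) = op (s a c) (inv (s a b)).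
Proof. apply mul_inv_comm_of_comm, circ_idem_comm; apply idem_mulV. Qed.

Lemma sigma_circ_inv (a b : A) :
  s a b = op (circ a b) (op (inv (s a (inv b))) (circ a (inv b))).
Proof. exact (circ_op a b (inv b)). Qed.

Lemma sigma_inv_circ (a b : A) :
  s a (inv b) = op (circ a (inv b)) (op (inv (s a b)) (circ a b)).
Proof. unfold sigma at 1; rewrite invK; apply circ_op. Qed.

Lemma sigma_inv_mul_inv_circ (a b : A) :
  op (s a (inv b)) (inv (circ a b)) = op (circ a (inv b)) (inv (s a b)).
Proof.
  rewrite sigma_inv_circ; assoc_r.
  rewrite (sigma_circ_inv a b), inv_mul_mulV; reflexivity.
Qed.

Lemma inv_circ_mul_sigma (a b : A) :
  op (inv (circ a b)) (s a b) = op (inv (s a (inv b))) (circ a (inv b)).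
Proof.
  assert (H : op (op (inv (circ a b)) (circ a b)) (inv (s a (inv b))) = inv (s a (inv b))).
  { rewrite sigma_inv_circ, (opA (circ a (inv b))); apply Vmul_inv_mul. }
  rewrite (sigma_circ_inv a b), (opA (inv (circ a b))), opA, H; reflexivity.
Qed.

Lemma lam_inv (a b : A) : lam a (inv b) = inv (lam a b).
Proof. rewrite !Hlam, inv_op, invK; symmetry; apply inv_circ_mul_sigma. Qed.

Lemma lam_idem_mul (a b e : A) :
  idempotent op e -> lam a (op e b) = op (lam a e) (lam a b).
Proof.
  intro He.
  rewrite !Hlam, (sigma_idem_mul a b He), circ_op, (sigma_idem a He), !inv_op, !invK.
  assoc_r.
  rewrite (comm_idem_pairs _ (idem_Vmul (s a b)) (idem_Vmul (circ a e))).
  rewrite inv_mul_invz; reflexivity.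
Qed.

End SemiTruss.

End InverseSemigroup.

Theorem proposition3p4 (A : Type) (op circ lam : A -> A -> A) (inv : A -> A)
  (Htruss : left_semi_truss op circ lam)
  (Hinv : inverse_semigroup op inv)
  (Hlam : forall a b, lam a b = op (inv (sigma op circ inv a b)) (circ a b)) :
  forall a b c e, idempotent op e ->
    let s := sigma op circ inv in
    (* (1) *) s a (op e b) = op (op (s a e) (inv (s a b))) (s a b) /\
    (* (2) *) s a (op e b) = op (op (s a b) (inv (s a e))) (s a e) /\
    (* (3) *) (idempotent op (op (s a b) (inv (s a c))) /\
               idempotent op (op (s a c) (inv (s a b))) /\
               op (s a b) (inv (s a c)) = op (s a c) (inv (s a b))) /\
    (* (4) *) left_compatible op inv (s a b) (s a c) /\
    (* (5) *) op (s a (inv b)) (inv (circ a b)) = op (circ a (inv b)) (inv (s a b)) /\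
    (* (6) *) op (inv (circ a b)) (s a b) = op (inv (s a (inv b))) (circ a (inv b)) /\
    (* (7) *) lam a (inv b) = inv (lam a b) /\
    (* (8) *) lam a (op e b) = op (lam a e) (lam a b).
Proof.
  intros a b c e He; cbv zeta.
  split; [exact (sigma_idem_mul Hinv Htruss Hlam a b He)|].
  split; [exact (sigma_idem_mulC Hinv Htruss Hlam a b He)|].
  split; [split; [|split]|].
  - exact (sigma_mul_inv_idem Hinv Htruss Hlam a b c).
  - exact (sigma_mul_inv_idem Hinv Htruss Hlam a c b).
  - exact (sigma_mul_inv_comm Hinv Htruss Hlam a b c).
  - split; [exact (sigma_mul_inv_idem Hinv Htruss Hlam a b c)|].
    split; [exact (sigma_inv_mul_inv_circ Hinv Htruss Hlam a b)|].
    split; [exact (inv_circ_mul_sigma Hinv Htruss Hlam a b)|].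
    split; [exact (lam_inv Hinv Htruss Hlam a b)|].
    exact (lam_idem_mul Hinv Htruss Hlam a b He).
Qed.
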